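(* Let $\mu$ be a partition of $k$ with $\ell(\mu)$ parts, $(S_1,S_2)$ a couple of pair-partitions of $[2k]$ of type $\mu$, and $G$ the group defined in the context. For each orbit $\Omega$ of the set of pair-partitions of $[2k]$ under the action of $G$ and any $S_0\in\Omega$, the quantity $\frac{2^{|\mathcal{L}(S_0,S_1)|}}{2^{\ell(\mu)}}\,|\Omega|$ is an integer.
   Context: Pair-partitions of $[2k]$ are sets of disjoint two-element subsets with union $[2k]$, identified with fixed-point-free involutions; $\sigma\in\mathfrak{S}_{2k}$ acts by: $\{\sigma(i),\sigma(j)\}\in\sigma\cdot P$ iff $\{i,j\}\in P$. $\mathcal{L}(A,B)$ is the bipartite graph with a black vertex per pair of $A$, a white vertex per pair of $B$, and an edge labeled $i$ for each $i\in[2k]$ joining the pairs containing $i$; it is a disjoint union of loops of lengths $2\ell_1\ge2\ell_2\ge\cdots$, $(\ell_1,\ell_2,\dots)$ is the type of $(A,B)$ and $|\mathcal{L}(A,B)|$ the number of loops. The group $G$: for each loop $L_i$ of $\mathcal{L}(S_1,S_2)$ (length $2\mu_i$) choose $j_{i,1}\in L_i$ and set $j_{i,2}=S_2(j_{i,1})$, $j_{i,3}=S_1(j_{i,2})$, $j_{i,4}=S_2(j_{i,3})$, alternately up to $j_{i,2\mu_i}$; let $r_i\in\mathfrak{S}_{2k}$ send $j_{i,m}$ to $j_{i,2\mu_i+1-m}$ for $m\in[2\mu_i]$ and fix all other elements; $G$ is the group generated by the $r_i$. *)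

From mathcomp Require Import all_boot all_order all_fingroup.
Set Implicit Arguments. Unset Strict Implicit. Unset Printing Implicit Defensive.

Section PairPartitions.
Variable n : nat.
Local Notation T := 'I_n.

(* Pair-partitions of [n] (n = 2k), identified with fixed-point-free involutions. *)
Definition pair_partitions : {set {perm T}} :=
  [set P : {perm T} | [forall i, (P (P i) == i) && (P i != i)]].

(* Edges (labels i) of L(A,B) are adjacent iff they share a pair of A or of B. *)
Definition ladj (A B : {perm T}) : rel T :=
  fun i j => (j == A i) || (j == B i).

(* The loops of L(A,B), each represented by its set of edge labels
   (a loop of length 2l has 2l labels). *)
Definition loops (A B : {perm T}) : {set {set T}} :=
  [set [set j | connect (ladj A B) i j] | i : T].

Definition nloops (A B : {perm T}) : nat := #|loops A B|.

Definition ltype (A B : {perm T}) : seq nat :=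
  sort geq [seq (#|L| %/ 2)%N | L : {set T} in loops A B].

(* Walk along a loop of L(S1,S2) starting at a:
   jseq 0 = a (= j_1), j_{m+1} = S2 j_m if m odd (1-indexed), S1 j_m otherwise. *)
Fixpoint jseq (S1 S2 : {perm T}) (a : T) (m : nat) : T :=
  match m with
  | 0 => a
  | m'.+1 => if ~~ odd m' then S2 (jseq S1 S2 a m') else S1 (jseq S1 S2 a m')
  end.

(* The map r_L: reverses the walk of the loop L starting at the base point b L,
   fixes everything outside L. *)
Definition rfun (S1 S2 : {perm T}) (b : {set T} -> T) (L : {set T}) (x : T) : T :=
  if x \in L then
    let m := find (fun m => jseq S1 S2 (b L) m == x) (iota 0 #|L|) in
    jseq S1 S2 (b L) (#|L|.-1 - m)
  else x.

Definition Ggen (S1 S2 : {perm T}) (b : {set T} -> T) : {set {perm T}} :=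
  [set p : {perm T} | [exists L in loops S1 S2, [forall x, p x == rfun S1 S2 b L x]]].

Definition Ggroup (S1 S2 : {perm T}) (b : {set T} -> T) : {group {perm T}} :=
  <<Ggen S1 S2 b>>%G.

(* Orbit of P under the action sigma . P = sigma o P o sigma^{-1}, i.e. P ^ sigma. *)
Definition pp_orbit (H : {set {perm T}}) (P : {perm T}) : {set {perm T}} :=
  [set (P ^ g)%g | g in H].

End PairPartitions.

Definition is_partition (mu : seq nat) (k : nat) : Prop :=
  [/\ sumn mu = k, sorted geq mu & all (fun x => 0 < x) mu].

From mathcomp Require Import all_boot all_order all_fingroup.

Set Implicit Arguments. Unset Strict Implicit. Unset Printing Implicit Defensive.

(* Each generator [r_L] reverses the walk around a loop [L] of L(S1,S2) and fixes
   the other labels; as [L] has even length, [r_L] moves every label of [L].  So an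
   element of G is determined by the set of loops it moves, every set of loops
   occurs, and |G| = 2^l(mu).  The orbit of S0 has size |G : C| for C the
   centraliser of S0 in G, hence |C| = 2^d with d <= l(mu).  The labels moved by
   g in C form a union of loops of L(S1,S2), a set stable under S1, and are stable
   under S0 since g commutes with S0: they form a union of loops of L(S0,S1), and
   determine g.  Thus d <= |L(S0,S1)|, and 2^l(mu) = 2^d |Omega| divides
   2^|L(S0,S1)| |Omega|. *)

Lemma pair_partition_invol n (P : {perm 'I_n}) :
  P \in pair_partitions n -> involutive P.
Proof. by rewrite inE => /forallP pp x; case/andP: (pp x) => /eqP. Qed.

Lemma pair_partition_fpf n (P : {perm 'I_n}) :
  P \in pair_partitions n -> forall x, P x != x.
Proof. by rewrite inE => /forallP pp x; case/andP: (pp x). Qed.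

Lemma rfun_notin n (A B : {perm 'I_n}) b (L : {set 'I_n}) (x : 'I_n) :
  x \notin L -> rfun A B b L x = x.
Proof. by rewrite /rfun => /negbTE->. Qed.

Section Loops.
Variables (n : nat) (A B : {perm 'I_n}).

Definition loop_of x := [set y | connect (ladj A B) x y].

Lemma mem_loop_of x : x \in loop_of x.
Proof. by rewrite inE connect0. Qed.

Lemma loop_of_loops x : loop_of x \in loops A B.
Proof. exact: imset_f. Qed.

Lemma size_ltype : size (ltype A B) = nloops A B.
Proof. by rewrite size_sort size_image. Qed.

Hypotheses (AK : involutive A) (BK : involutive B).

Lemma ladj_sym : symmetric (ladj A B).
Proof. by move=> x y; rewrite /ladj !(eq_sym y) (can2_eq AK AK) (can2_eq BK BK). Qed.

Lemma loop_of_eq x y : y \in loop_of x -> loop_of y = loop_of x.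
Proof.
rewrite inE => xy; apply/setP => z; rewrite !inE.
by apply/idP/idP; apply: connect_trans; rewrite // (sym_connect_sym ladj_sym).
Qed.

Lemma loops_mem L x : L \in loops A B -> x \in L -> L = loop_of x.
Proof. by case/imsetP => y _ -> /loop_of_eq. Qed.

Lemma loop_ofA x : loop_of (A x) = loop_of x.
Proof. by apply: loop_of_eq; rewrite inE connect1 // /ladj eqxx. Qed.

Hypotheses (A_fpf : forall x, A x != x) (B_fpf : forall x, B x != x).

Definition walk_step m : {perm 'I_n} := if odd m then A else B.

Lemma walk_stepK m : involutive (walk_step m).
Proof. by rewrite /walk_step; case: odd. Qed.

Lemma walk_step_fpf m x : walk_step m x != x.
Proof. by rewrite /walk_step; case: odd. Qed.

Lemma walk_step_addr_even m t : ~~ odd t -> walk_step (m + t) = walk_step m.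
Proof. by move=> ev_t; rewrite /walk_step oddD (negbTE ev_t) addbF. Qed.

Lemma ladj_walk_step m x y :
  ladj A B x y -> y = walk_step m x \/ y = walk_step m.+1 x.
Proof. by rewrite /walk_step /=; case: odd => /orP[] /eqP->; auto. Qed.

Variable a : 'I_n.
Local Notation j := (jseq A B a).
Local Notation L := (loop_of a).
Local Notation N := #|L|.

Lemma jseqS m : j m.+1 = walk_step m (j m).
Proof. by rewrite /= /walk_step; case: odd. Qed.

Lemma jseq_pred m : j m = walk_step m (j m.+1).
Proof. by rewrite jseqS walk_stepK. Qed.

Lemma jseq_in_loop m : j m \in L.
Proof.
elim: m => [|m IH]; first exact: mem_loop_of.
rewrite jseqS inE; rewrite inE in IH; apply: connect_trans IH (connect1 _).
by rewrite /ladj /walk_step; case: odd; rewrite eqxx ?orbT.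
Qed.

(* A repeat [j s = j t] with [s > 0], or with [s] and [t] of different parity,
   yields an earlier one, one step back or one step inward. *)
Lemma jseq_first_repeat s t :
    (forall u v, u < t -> v < t -> j u = j v -> u = v) ->
  s < t -> j s = j t -> s = 0 /\ ~~ odd t.
Proof.
case: t => // t inj_t lt_st E.
have [par|par] := boolP (odd s == odd t).
  exfalso; move: lt_st; rewrite ltnS leq_eqVlt => /predU1P[eq_st|lt_st].
    by move: (walk_step_fpf t (j t)); rewrite -jseqS -E eq_st eqxx.
  have eq_st : s.+1 = t.
    by apply: inj_t; rewrite ?ltnS // jseqS (jseq_pred t) E /walk_step (eqP par).
  by move: par; rewrite -eq_st /=; case: odd.
have s0 : s = 0.
  case: s lt_st E par => // s lt_st E par.
  have ws : walk_step s = walk_step t.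
    by rewrite /walk_step; move: par => /=; do 2!case: odd.
  have eq_st : s = t.
    by apply: inj_t; rewrite ?(ltnW lt_st) // (jseq_pred s) E ws -jseq_pred.
  by move: lt_st; rewrite eq_st ltnn.
by split=> //; move: par; rewrite s0 /=; case: odd.
Qed.

Lemma jseq_period t m : ~~ odd t -> j t = a -> j (m + t) = j m.
Proof.
move=> ev_t jt; elim: m => [|m IH]; first by rewrite add0n.
by rewrite addSn !jseqS IH walk_step_addr_even.
Qed.

Lemma jseq_mod t m : ~~ odd t -> j t = a -> j m = j (m %% t).
Proof.
move=> ev_t jt; rewrite {1}(divn_eq m t).
elim: (m %/ t) => [|q IH]; first by rewrite mul0n add0n.
by rewrite mulSnr addnAC jseq_period.
Qed.

Lemma loop_card_le_period t : 0 < t -> ~~ odd t -> j t = a -> N <= t.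
Proof.
move=> t_gt0 ev_t jt; pose W := [set j m | m : 'I_t].
have jW m : j m \in W.
  by rewrite (jseq_mod m ev_t jt); apply/imsetP; exists (Ordinal (ltn_pmod m t_gt0)).
have closedW : closed (ladj A B) W.
  apply: (intro_closed (sym_connect_sym ladj_sym)) => x y xy /imsetP[m _ xE].
  have {x xE}xy : ladj A B (j (m + t.-1).+1) y.
    by rewrite -addnS prednK // jseq_period -?xE.
  case/(ladj_walk_step (m + t.-1)): xy => ->.
    by rewrite -jseq_pred.
  by rewrite -jseqS.
have LW : L \subset W.
  by apply/subsetP => y; rewrite inE => /(closed_connect closedW) <-; apply: (jW 0).
apply: leq_trans (subset_leq_card LW) _.
by rewrite (leq_trans (leq_imset_card _ _)) ?card_ord.
Qed.

Lemma jseq_inj_prefix t : t <= N -> forall u v, u < t -> v < t -> j u = j v -> u = v.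
Proof.
elim: t => [_ u v|t IH lt_tN]; first by rewrite ltn0.
have inj_t := IH (ltnW lt_tN).
have fresh s : s < t -> j s = j t -> False.
  move=> lt_st E; have [s0 ev_t] := jseq_first_repeat inj_t lt_st E.
  have := loop_card_le_period (leq_ltn_trans (leq0n s) lt_st) ev_t.
  by rewrite -E s0 => /(_ erefl); rewrite leqNgt lt_tN.
move=> u v; rewrite ltnS leq_eqVlt => /predU1P[->|lt_ut];
  rewrite ltnS leq_eqVlt => /predU1P[->|lt_vt] //.
- by move=> /esym /(fresh _ lt_vt).
- by move=> /(fresh _ lt_ut).
- exact: inj_t.
Qed.

Lemma jseq_inj u v : u < N -> v < N -> j u = j v -> u = v.
Proof. exact: jseq_inj_prefix. Qed.

Lemma loop_jseq : L = [set j m | m : 'I_N].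
Proof.
have inj_j : injective (fun m : 'I_N => j m).
  by move=> u v /(jseq_inj (ltn_ord u) (ltn_ord v)) /val_inj.
apply/esym/eqP; rewrite eqEcard card_imset // card_ord leqnn andbT.
by apply/subsetP => _ /imsetP[m _ ->]; apply: jseq_in_loop.
Qed.

Lemma loop_card_gt0 : 0 < N.
Proof. by apply/card_gt0P; exists a; apply: mem_loop_of. Qed.

Lemma loop_card_even : ~~ odd N.
Proof.
have /imsetP[m _ jm] : j N \in [set j m | m : 'I_N] by rewrite -loop_jseq jseq_in_loop.
by case: (jseq_first_repeat jseq_inj (ltn_ord m) (esym jm)).
Qed.

Definition loop_index x := find (fun m => j m == x) (iota 0 N).

Lemma loop_index_jseq m : m < N -> loop_index (j m) = m.
Proof.
move=> lt_mN; have has_m : has (fun u => j u == j m) (iota 0 N).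
  by apply/hasP; exists m; rewrite ?mem_iota.
have lt_idx : loop_index (j m) < N by rewrite -[N in _ < N](size_iota 0 N) -has_find.
by apply: jseq_inj => //; move: (nth_find 0 has_m); rewrite nth_iota // => /eqP.
Qed.

Lemma loop_indexK x : x \in L -> j (loop_index x) = x /\ loop_index x < N.
Proof.
move=> xL; have /imsetP[m _ ->] : x \in [set j m | m : 'I_N] by rewrite -loop_jseq.
by rewrite loop_index_jseq.
Qed.

Variable b : {set 'I_n} -> 'I_n.
Hypothesis b_loop : b L = a.
Local Notation r := (rfun A B b L).

Lemma rfun_loop x : x \in L -> r x = j (N.-1 - loop_index x).
Proof. by move=> xL; rewrite /rfun xL b_loop. Qed.

Lemma rfun_in x : x \in L -> r x \in L.
Proof. by move=> xL; rewrite rfun_loop // jseq_in_loop. Qed.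

Lemma rev_index_lt m : N.-1 - m < N.
Proof. by rewrite (leq_ltn_trans (leq_subr _ _)) // ltn_predL loop_card_gt0. Qed.

Lemma rfunK : involutive r.
Proof.
move=> x; have [xL|xNL] := boolP (x \in L); last by rewrite !rfun_notin.
have [jx lt_xN] := loop_indexK xL.
rewrite (rfun_loop (rfun_in xL)) rfun_loop // loop_index_jseq ?rev_index_lt //.
by rewrite subKn // -ltnS (ltn_predK lt_xN).
Qed.

(* [r] maps the [i]-th label of the walk to the [(N-1-i)]-th one, and [N] is even. *)
Lemma rfun_fpf x : x \in L -> r x != x.
Proof.
move=> xL; have [jx lt_xN] := loop_indexK xL; set i := loop_index x in jx lt_xN *.
rewrite rfun_loop //; apply/eqP; rewrite -{2}jx => /(jseq_inj (rev_index_lt i) lt_xN) E.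
have NE : N = (i + i).+1.
  by rewrite -{1}E subnK ?(ltn_predK lt_xN) // -ltnS (ltn_predK lt_xN).
by move: loop_card_even; rewrite NE /= addnn odd_double.
Qed.

End Loops.

Section ReflectionGroup.
Variables (n : nat) (S1 S2 : {perm 'I_n}) (b : {set 'I_n} -> 'I_n).
Hypotheses (S1_pp : S1 \in pair_partitions n) (S2_pp : S2 \in pair_partitions n).
Hypothesis b_in : forall L, L \in loops S1 S2 -> b L \in L.
Implicit Types (I J : {set {set 'I_n}}) (L : {set 'I_n}) (x : 'I_n) (g h : {perm 'I_n}).

Let S1K := pair_partition_invol S1_pp.
Let S2K := pair_partition_invol S2_pp.
Let S1_fpf := pair_partition_fpf S1_pp.
Let S2_fpf := pair_partition_fpf S2_pp.

Local Notation loop := (loop_of S1 S2).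
Local Notation G := (Ggroup S1 S2 b).

Lemma loop_of_b L : L \in loops S1 S2 -> loop (b L) = L.
Proof. by move=> hL; rewrite -(loops_mem S1K S2K hL (b_in hL)). Qed.

Lemma loops_base L : L \in loops S1 S2 -> exists2 a, L = loop a & b (loop a) = a.
Proof. by move=> hL; exists (b L); rewrite loop_of_b. Qed.

Lemma rfun_loopsK L : L \in loops S1 S2 -> involutive (rfun S1 S2 b L).
Proof. by case/loops_base=> a -> ba; apply: rfunK. Qed.

Lemma rfun_loops_in L x : L \in loops S1 S2 -> x \in L -> rfun S1 S2 b L x \in L.
Proof. by case/loops_base=> a -> ba; apply: rfun_in. Qed.

Lemma rfun_loops_fpf L x : L \in loops S1 S2 -> x \in L -> rfun S1 S2 b L x != x.
Proof. by case/loops_base=> a -> ba; apply: rfun_fpf. Qed.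

Definition rloops (I : {set {set 'I_n}}) x :=
  if loop x \in I then rfun S1 S2 b (loop x) x else x.

Lemma loop_rloops I x : loop (rloops I x) = loop x.
Proof.
rewrite /rloops; case: ifP => // _.
by apply: loop_of_eq => //; apply: rfun_loops_in; rewrite ?loop_of_loops ?mem_loop_of.
Qed.

Lemma rloops_moved I x : (rloops I x != x) = (loop x \in I).
Proof.
rewrite /rloops; case: ifP; rewrite ?eqxx // => _.
by rewrite rfun_loops_fpf ?loop_of_loops ?mem_loop_of.
Qed.

Lemma rloopsK I : involutive (rloops I).
Proof.
move=> x; rewrite {1}/rloops loop_rloops /rloops.
by case: (loop x \in I); rewrite ?rfun_loopsK ?loop_of_loops.
Qed.

Lemma rloopsM I J x : rloops J (rloops I x) = rloops (I :\: J :|: J :\: I) x.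
Proof.
rewrite {1}/rloops loop_rloops /rloops !inE.
case: (loop x \in I); case: (loop x \in J) => //=.
by rewrite rfun_loopsK ?loop_of_loops.
Qed.

Lemma rloops_set1 L : L \in loops S1 S2 -> rloops [set L] =1 rfun S1 S2 b L.
Proof.
move=> hL x; rewrite /rloops inE.
have [xL|xNL] := boolP (x \in L); first by rewrite -(loops_mem S1K S2K hL xL) eqxx.
have /negbTE-> : loop x != L by apply: contraNneq xNL => <-; apply: mem_loop_of.
by rewrite rfun_notin.
Qed.

Definition rperm I : {perm 'I_n} := perm (can_inj (rloopsK I)).

Lemma rpermE I : rperm I =1 rloops I.
Proof. exact: permE. Qed.

Lemma rperm0 : rperm set0 = 1%g.
Proof. by apply/permP => x; rewrite rpermE perm1 /rloops inE. Qed.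

Lemma rpermM I J : (rperm I * rperm J)%g = rperm (I :\: J :|: J :\: I).
Proof. by apply/permP => x; rewrite permM !rpermE rloopsM. Qed.

Lemma rperm_moved I x : (rperm I x != x) = (loop x \in I).
Proof. by rewrite rpermE rloops_moved. Qed.

Lemma rperm_fix_inj I J : I \subset loops S1 S2 -> J \subset loops S1 S2 ->
  (forall x, (rperm I x != x) = (rperm J x != x)) -> I = J.
Proof.
move=> sI sJ eq_moved; apply/setP => L.
have [hL|hNL] := boolP (L \in loops S1 S2).
  by rewrite -(loop_of_b hL) -!rperm_moved.
by rewrite (contraNF (subsetP sI L)) ?(contraNF (subsetP sJ L)).
Qed.

Lemma rperm_Ggroup I : I \subset loops S1 S2 -> rperm I \in G.
Proof.
move: {2}#|I| (erefl #|I|) => m; elim: m I => [|m IH] I cardI sIL.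
  by move/eqP: cardI; rewrite cards_eq0 => /eqP->; rewrite rperm0 group1.
have [L IL] : exists L, L \in I by apply/set0Pn; rewrite -card_gt0 cardI.
have hL : L \in loops S1 S2 by apply: (subsetP sIL).
have -> : I = (I :\ L) :\: [set L] :|: [set L] :\: (I :\ L).
  by apply/setP => L'; rewrite !inE; case: eqVneq => [->|_] /=; rewrite ?IL ?andbF ?orbF.
rewrite -rpermM groupM //.
  apply: IH; last exact: subset_trans (subsetDl I [set L]) sIL.
  by move: cardI; rewrite (cardsD1 L) IL => -[].
apply: mem_gen; rewrite inE; apply/existsP; exists L; rewrite hL /=.
by apply/forallP => x; rewrite rpermE rloops_set1.
Qed.

Definition rperms := rperm @: powerset (loops S1 S2).

Lemma group_set_rperms : group_set rperms.
Proof.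
apply/group_setP; split.
  by rewrite -rperm0; apply: imset_f; rewrite powersetE sub0set.
move=> _ _ /imsetP[I sI ->] /imsetP[J sJ ->]; rewrite rpermM; apply: imset_f.
move: sI sJ; rewrite !powersetE => sI sJ.
by rewrite subUset !(subset_trans (subsetDl _ _)).
Qed.

Canonical rperms_group := Group group_set_rperms.

Lemma Ggroup_rperms : G = rperms :> {set {perm 'I_n}}.
Proof.
apply/eqP; rewrite eqEsubset; apply/andP; split.
  rewrite gen_subG; apply/subsetP => p; rewrite inE => /existsP[L /andP[hL /forallP hp]].
  apply/imsetP; exists [set L]; first by rewrite powersetE sub1set.
  by apply/permP => x; rewrite (eqP (hp x)) rpermE rloops_set1.
by apply/subsetP => _ /imsetP[I sI ->]; apply: rperm_Ggroup; rewrite powersetE in sI.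
Qed.

Lemma card_Ggroup : #|G| = 2 ^ nloops S1 S2.
Proof.
rewrite Ggroup_rperms card_in_imset ?card_powerset // => I J.
by rewrite !powersetE => sI sJ eqIJ; apply: rperm_fix_inj => // x; rewrite eqIJ.
Qed.

Lemma Ggroup_fix_inj g h : g \in G -> h \in G ->
  (forall x, (g x != x) = (h x != x)) -> g = h.
Proof.
rewrite Ggroup_rperms => /imsetP[I sI ->] /imsetP[J sJ ->] eq_moved.
by move: sI sJ; rewrite !powersetE => sI sJ; rewrite (rperm_fix_inj sI sJ eq_moved).
Qed.

Lemma Ggroup_fixS1 g x : g \in G -> (g (S1 x) != S1 x) = (g x != x).
Proof. by rewrite Ggroup_rperms => /imsetP[I _ ->]; rewrite !rperm_moved loop_ofA. Qed.

Variable S0 : {perm 'I_n}.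

Lemma cent1_fix_closed g : g \in ('C_G[S0])%g -> closed (ladj S0 S1) [pred x | g x != x].
Proof.
case/setIP => gG /cent1P gS0 x y /orP[] /eqP->; rewrite !inE.
  by rewrite -permM -gS0 permM (inj_eq perm_inj).
by rewrite Ggroup_fixS1.
Qed.

Definition moved_loops g := [set C in loops S0 S1 | [exists x in C, g x != x]].

Lemma moved_loopsE g x : g \in ('C_G[S0])%g ->
  (g x != x) = (loop_of S0 S1 x \in moved_loops g).
Proof.
move=> gC; rewrite inE loop_of_loops /=.
apply/idP/existsP => [gx|[y /andP[xy gy]]]; first by exists x; rewrite mem_loop_of.
rewrite inE in xy; have := closed_connect (cent1_fix_closed gC) xy.
by rewrite !inE => ->.
Qed.

Lemma card_cent1_Ggroup : #|('C_G[S0])%g| <= 2 ^ nloops S0 S1.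
Proof.
rewrite -card_powerset -(card_in_imset (f := moved_loops)).
  apply/subset_leq_card/subsetP => _ /imsetP[g _ ->].
  by rewrite powersetE; apply/subsetP => C; rewrite inE => /andP[].
move=> g h gC hC eq_gh; have [gG _] := setIP gC; have [hG _] := setIP hC.
by apply: Ggroup_fix_inj => // x; rewrite !moved_loopsE // eq_gh.
Qed.

End ReflectionGroup.

Lemma dvdn_pfactor_index p l c m i :
  prime p -> m * i = p ^ l -> m <= p ^ c -> p ^ l %| p ^ c * i.
Proof.
move=> p_pr mi_pl m_le.
have [d le_dl m_pd] : exists2 d, d <= l & m = p ^ d.
  by apply/dvdn_pfactor => //; rewrite -mi_pl dvdn_mulr.
have le_dc : d <= c by rewrite -(leq_exp2l _ _ (prime_gt1 p_pr)) -m_pd.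
by rewrite -mi_pl m_pd -(subnK le_dc) expnD -mulnA dvdn_mull.
Qed.

Theorem lemma3p11 (k : nat) (mu : seq nat) (S1 S2 : {perm 'I_(2 * k)})
    (b : {set 'I_(2 * k)} -> 'I_(2 * k)) :
  is_partition mu k ->
  S1 \in pair_partitions (2 * k) -> S2 \in pair_partitions (2 * k) ->
  ltype S1 S2 = mu ->
  (forall L, L \in loops S1 S2 -> b L \in L) ->
  forall Omega : {set {perm 'I_(2 * k)}},
    (exists2 P, P \in pair_partitions (2 * k) &
        Omega = pp_orbit (Ggroup S1 S2 b) P) ->
    forall S0, S0 \in Omega ->
      (2 ^ size mu %| 2 ^ nloops S0 S1 * #|Omega|)%N.
Proof.
move=> _ S1_pp S2_pp <- b_in Omega [P _ ->] S0 S0_orbit.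
have -> : pp_orbit (Ggroup S1 S2 b) P = (S0 ^: Ggroup S1 S2 b)%g.
  by apply/esym/class_eqP.
rewrite size_ltype -index_cent1.
apply: dvdn_pfactor_index (card_cent1_Ggroup S1_pp S2_pp b_in S0) => //.
by rewrite Lagrange ?subsetIl // card_Ggroup.
Qed.
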